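(* Let $A$ be a centrally essential ring such that the factor ring $A/J(A)$ by the Jacobson radical is not commutative. Then the polynomial ring $A[x]$ (in a central indeterminate $x$) is centrally essential but is neither right quasi-invariant nor left quasi-invariant.
   Context: All rings are associative, unital and non-zero. $Z(A)$ denotes the center of a ring $A$. A ring $A$ is centrally essential if either $A$ is commutative or for every non-central element $a\in A$ there exist non-zero central elements $x,y\in Z(A)$ with $ax=y$. A ring is right (resp. left) quasi-invariant if every maximal right (resp. left) ideal of it is a two-sided ideal. *)

From HB Require Import structures.
From mathcomp Require Import all_boot all_order all_algebra.
Set Implicit Arguments. Unset Strict Implicit. Unset Printing Implicit Defensive.
Import GRing.Theory.
Local Open Scope ring_scope.

Definition central (R : nzRingType) (x : R) : Prop := forall y : R, x * y = y * x.

Definition commutative_ring (R : nzRingType) : Prop := forall a b : R, a * b = b * a.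

Definition centrally_essential (R : nzRingType) : Prop :=
  commutative_ring R \/
  forall a : R, ~ central a ->
    exists x y : R, [/\ x <> 0, y <> 0, central x, central y & a * x = y].

Definition additive_subgroup (R : nzRingType) (I : R -> Prop) : Prop :=
  [/\ I 0, forall a b, I a -> I b -> I (a + b) & forall a, I a -> I (- a)].

Definition right_ideal (R : nzRingType) (I : R -> Prop) : Prop :=
  additive_subgroup I /\ forall a r, I a -> I (a * r).

Definition left_ideal (R : nzRingType) (I : R -> Prop) : Prop :=
  additive_subgroup I /\ forall a r, I a -> I (r * a).

Definition two_sided_ideal (R : nzRingType) (I : R -> Prop) : Prop :=
  right_ideal I /\ left_ideal I.

Definition proper (R : nzRingType) (I : R -> Prop) : Prop := exists a, ~ I a.

Definition maximal_right_ideal (R : nzRingType) (M : R -> Prop) : Prop :=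
  [/\ right_ideal M, proper M &
      forall N : R -> Prop, right_ideal N -> proper N ->
        (forall a, M a -> N a) -> forall a, N a -> M a].

Definition maximal_left_ideal (R : nzRingType) (M : R -> Prop) : Prop :=
  [/\ left_ideal M, proper M &
      forall N : R -> Prop, left_ideal N -> proper N ->
        (forall a, M a -> N a) -> forall a, N a -> M a].

Definition jacobson (R : nzRingType) (a : R) : Prop :=
  forall M : R -> Prop, maximal_right_ideal M -> M a.

(* The factor ring R/J(R) is commutative iff all commutators lie in J(R). *)
Definition factor_by_jacobson_commutative (R : nzRingType) : Prop :=
  forall a b : R, jacobson (a * b - b * a).

Definition right_quasi_invariant (R : nzRingType) : Prop :=
  forall M : R -> Prop, maximal_right_ideal M -> two_sided_ideal M.

Definition left_quasi_invariant (R : nzRingType) : Prop :=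
  forall M : R -> Prop, maximal_left_ideal M -> two_sided_ideal M.

(* The proof has
   three independent parts.
   - Central essentiality lifts to A[x]: a non-central polynomial is made to
     have central coefficients by multiplying it, from the top coefficient
     down, by central constants supplied by the hypothesis on A.
   - Evaluation ideals.  For a maximal right ideal M of A and t with tM <= M,
     the preimage of M under the left evaluation f |-> sum t^i f_i is a maximal
     right ideal of A[x]; symmetrically, for a maximal left ideal L with
     Lt <= L, the preimage of L under f |-> f(t) is a maximal left ideal.
     Both are instances of a general fact on preimages of maximal one-sided
     ideals under unital module retractions.
   - If A[x] is right quasi-invariant, then (using t = 0) every maximal right
     ideal M of A is two-sided, and then (using t = a, and b(x - a)) M contains
     every commutator ab - ba, i.e. A/J(A) is commutative.  The left-hand
     argument shows that every commutator lies in all maximal left ideals;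
     since the left Jacobson radical is contained in the right one (proved via
     Zorn's lemma and quasi-regularity), A/J(A) is again commutative. *)

From Pilot Require Import Defs.
From mathcomp Require Import all_boot all_algebra.
From mathcomp Require classical_sets.
From Stdlib Require Import Classical.
Set Implicit Arguments. Unset Strict Implicit. Unset Printing Implicit Defensive.
Import GRing.Theory.
Local Open Scope ring_scope.

Section Ideals.
Variable R : nzRingType.
Implicit Types (I M : R -> Prop) (a u : R).

Lemma additive_subgroupB I a b : additive_subgroup I -> I a -> I b -> I (a - b).
Proof. by move=> [_ ID IN] Ia Ib; apply: ID => //; apply: IN. Qed.

Lemma right_ideal_not1 M : right_ideal M -> Defs.proper M -> ~ M 1.
Proof. by move=> [_ MM] [a Ma] M1; apply: Ma; rewrite -(mul1r a); apply: MM. Qed.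

Lemma left_ideal_not1 M : left_ideal M -> Defs.proper M -> ~ M 1.
Proof. by move=> [_ MM] [a Ma] M1; apply: Ma; rewrite -(mulr1 a); apply: MM. Qed.

Lemma maximal_right_comax M u : maximal_right_ideal M -> ~ M u ->
  exists v m, M m /\ u * v + m = 1.
Proof.
move=> [[[M0 MD MN] MM] _ Mmax] Mu.
pose N z := exists v m, M m /\ z = u * v + m.
suff [v [m [Mm ->]]] : N 1 by exists v, m.
apply: NNPP => N1; apply: Mu; apply: (Mmax N); last by exists 1, 0; rewrite mulr1 addr0.
- split; first split.
  + by exists 0, 0; rewrite mulr0 addr0.
  + move=> _ _ [v [m [Mm ->]]] [v' [m' [Mm' ->]]].
    by exists (v + v'), (m + m'); rewrite mulrDr addrACA; split=> //; apply: MD.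
  + move=> _ [v [m [Mm ->]]].
    by exists (- v), (- m); rewrite opprD mulrN; split=> //; apply: MN.
  + move=> _ r [v [m [Mm ->]]].
    by exists (v * r), (m * r); rewrite mulrDl mulrA; split=> //; apply: MM.
- by exists 1.
- by move=> a Ma; exists 0, a; rewrite mulr0 add0r.
Qed.

Lemma maximal_left_comax M u : maximal_left_ideal M -> ~ M u -> exists v m, M m /\ v * u + m = 1.
Proof.
move=> [[[M0 MD MN] MM] _ Mmax] Mu.
pose N z := exists v m, M m /\ z = v * u + m.
suff [v [m [Mm ->]]] : N 1 by exists v, m.
apply: NNPP => N1; apply: Mu; apply: (Mmax N); last by exists 1, 0; rewrite mul1r addr0.
- split; first split.
  + by exists 0, 0; rewrite mul0r addr0.
  + move=> _ _ [v [m [Mm ->]]] [v' [m' [Mm' ->]]].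
    by exists (v + v'), (m + m'); rewrite mulrDl addrACA; split=> //; apply: MD.
  + move=> _ [v [m [Mm ->]]].
    by exists (- v), (- m); rewrite opprD mulNr; split=> //; apply: MN.
  + move=> _ r [v [m [Mm ->]]].
    by exists (r * v), (r * m); rewrite mulrDr mulrA; split=> //; apply: MM.
- by exists 1.
- by move=> a Ma; exists 0, a; rewrite mul0r add0r.
Qed.

End Ideals.

Section Pullback.
Variables (R A : nzRingType) (phi : R -> A) (iota : A -> R) (M : A -> Prop).
Hypotheses (phiB : forall f g, phi (f - g) = phi f - phi g) (phi1 : phi 1 = 1).

Lemma preimage_maximal_right :
  (forall f v, phi (f * iota v) = phi f * v) ->
  maximal_right_ideal M -> right_ideal (fun f => M (phi f)) ->
  maximal_right_ideal (fun f => M (phi f)).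
Proof.
move=> phiM Mmax Qr; have [[Ms _] _ _] := Mmax.
have M1 : ~ M 1 by apply: right_ideal_not1; case: Mmax.
split=> //; first by exists 1; rewrite phi1.
move=> N [Ns NM] Np QN f Nf; apply: NNPP => Mf.
have [v [m [Mm e]]] := maximal_right_comax Mmax Mf.
have Qfv : M (phi (f * iota v - 1)).
  by rewrite phiB phiM phi1 -e opprD addNKr; case: Ms => _ _; apply.
apply: (right_ideal_not1 (conj Ns NM) Np).
by rewrite -[1](subKr (f * iota v)); apply: additive_subgroupB => //; [apply: NM | apply: QN].
Qed.


Lemma preimage_maximal_left :
  (forall f v, phi (iota v * f) = v * phi f) ->
  maximal_left_ideal M -> left_ideal (fun f => M (phi f)) ->
  maximal_left_ideal (fun f => M (phi f)).
Proof.
move=> phiM Mmax Ql; have [[Ms _] _ _] := Mmax.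
have M1 : ~ M 1 by apply: left_ideal_not1; case: Mmax.
split=> //; first by exists 1; rewrite phi1.
move=> N [Ns NM] Np QN f Nf; apply: NNPP => Mf.
have [v [m [Mm e]]] := maximal_left_comax Mmax Mf.
have Qvf : M (phi (iota v * f - 1)).
  by rewrite phiB phiM phi1 -e opprD addNKr; case: Ms => _ _; apply.
apply: (left_ideal_not1 (conj Ns NM) Np).
by rewrite -[1](subKr (iota v * f)); apply: additive_subgroupB => //; [apply: NM | apply: QN].
Qed.

End Pullback.

Section LeftEvaluation.
Variables (A : nzRingType) (t : A).
Implicit Types p q : {poly A}.

(* left evaluation at t: the coefficients are multiplied by powers of t on
   the left; it is right A-linear, unlike the (right) evaluation horner *)
Definition leval (p : {poly A}) : A := \sum_(i < size p) t ^+ i * p`_i.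

Lemma leval_widen n p : (size p <= n)%N -> leval p = \sum_(i < n) t ^+ i * p`_i.
Proof.
move=> le_p_n; rewrite /leval (big_ord_widen n (fun i => t ^+ i * p`_i)) // big_mkcond.
by apply: eq_bigr => i _; case: ltnP => // le_p_i; rewrite nth_default ?mulr0.
Qed.

Lemma levalD p q : leval (p + q) = leval p + leval q.
Proof.
pose n := maxn (size p) (size q).
rewrite (@leval_widen n (p + q)) ?(leq_trans (size_polyD _ _)) //.
rewrite (@leval_widen n p) ?leq_maxl // (@leval_widen n q) ?leq_maxr // -big_split.
by apply: eq_bigr => i _; rewrite coefD mulrDr.
Qed.

Lemma levalN p : leval (- p) = - leval p.
Proof. by rewrite /leval size_polyN -sumrN; apply: eq_bigr => i _; rewrite coefN mulrN. Qed.

Lemma levalB p q : leval (p - q) = leval p - leval q.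
Proof. by rewrite levalD levalN. Qed.

Lemma levalC c : leval c%:P = c.
Proof.
by rewrite (@leval_widen 1) ?size_polyC ?leq_b1 // big_ord1 coefC expr0 mul1r.
Qed.

Lemma levalMC p c : leval (p * c%:P) = leval p * c.
Proof.
rewrite (@leval_widen (size p)); last first.
  rewrite (leq_trans (size_polyMleq _ _)) // size_polyC.
  by case: (c != 0); rewrite ?addn1 ?addn0 ?leq_pred.
by rewrite /leval mulr_suml; apply: eq_bigr => i _; rewrite coefMC mulrA.
Qed.

Lemma levalMX p : leval (p * 'X) = t * leval p.
Proof.
have [->|p0] := eqVneq p 0; first by rewrite mul0r /leval size_poly0 !big_ord0 mulr0.
rewrite (@leval_widen (size p).+1) ?size_mulX // big_ord_recl coefMX mulr0 add0r.
by rewrite /leval mulr_sumr; apply: eq_bigr => i _; rewrite coefMX exprS mulrA.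
Qed.

Lemma levalX : leval 'X = t.
Proof. by rewrite -['X]mul1r -polyC1 levalMX levalC mulr1. Qed.

End LeftEvaluation.

Section EvaluationIdeals.
Variables (A : nzRingType) (M : A -> Prop) (t : A).

Lemma leval_right_ideal : right_ideal M -> (forall m, M m -> M (t * m)) ->
  right_ideal (fun f : {poly A} => M (leval t f)).
Proof.
move=> [[M0 MD MN] MM] Mt; split; first split.
- by rewrite -polyC0 levalC.
- by move=> f g Mf Mg; rewrite levalD; apply: MD.
- by move=> f Mf; rewrite levalN; apply: MN.
move=> f g Mf; elim/poly_ind: g => [|q c IH]; first by rewrite mulr0 -polyC0 levalC.
by rewrite mulrDr mulrA levalD levalMX levalMC; apply: MD; [apply: Mt | apply: MM].
Qed.

Lemma horner_left_ideal : left_ideal M -> (forall m, M m -> M (m * t)) ->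
  left_ideal (fun f : {poly A} => M f.[t]).
Proof.
move=> [[M0 MD MN] MM] Mt; split; first split.
- by rewrite horner0.
- by move=> f g Mf Mg; rewrite hornerD; apply: MD.
- by move=> f Mf; rewrite hornerN; apply: MN.
move=> f g Mf; elim/poly_ind: g => [|q c IH]; first by rewrite mul0r horner0.
rewrite mulrDl -mulrA -commr_polyX mulrA hornerD hornerMX hornerCM.
by apply: MD; [apply: Mt | apply: MM].
Qed.

Lemma leval_maximal : maximal_right_ideal M -> (forall m, M m -> M (t * m)) ->
  maximal_right_ideal (fun f : {poly A} => M (leval t f)).
Proof.
move=> Mmax Mt; apply: (preimage_maximal_right (iota := polyC)) => //.
- exact: levalB.
- by rewrite -polyC1 levalC.
- exact: levalMC.
- by apply: leval_right_ideal => //; case: Mmax.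
Qed.

Lemma horner_maximal : maximal_left_ideal M -> (forall m, M m -> M (m * t)) ->
  maximal_left_ideal (fun f : {poly A} => M f.[t]).
Proof.
move=> Mmax Mt; apply: (preimage_maximal_left (iota := polyC)) => //.
- by move=> f g; rewrite hornerD hornerN.
- by rewrite hornerC.
- by move=> f v; rewrite hornerCM.
- by apply: horner_left_ideal => //; case: Mmax.
Qed.

End EvaluationIdeals.

Section QuasiInvariantPolynomials.
Variable A : nzRingType.

Lemma right_qi_poly_commutator : right_quasi_invariant {poly A} ->
  forall M, maximal_right_ideal M -> forall a b : A, M (a * b - b * a).
Proof.
move=> rqi M Mmax a b; have [[[M0 _ _] _] _ _] := Mmax.
have Mleft r m : M m -> M (r * m).
  have M0l x : M x -> M (0 * x) by rewrite mul0r.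
  have [_ [_ Q0l]] := rqi _ (leval_maximal Mmax M0l).
  by have := Q0l m%:P r%:P; rewrite -polyCM !levalC.
have [_ [_ Qal]] := rqi _ (leval_maximal Mmax (Mleft a)).
have := Qal ('X - a%:P) b%:P; rewrite mulrBr -polyCM !levalB levalMX !levalC levalX.
by rewrite subrr; apply.
Qed.

Lemma left_qi_poly_commutator : left_quasi_invariant {poly A} ->
  forall L, maximal_left_ideal L -> forall a b : A, L (a * b - b * a).
Proof.
move=> lqi L Lmax a b; have [[[L0 _ LN] _] _ _] := Lmax.
have Lright r m : L m -> L (m * r).
  have L0r x : L x -> L (x * 0) by rewrite mulr0.
  have [[_ Q0r] _] := lqi _ (horner_maximal Lmax L0r).
  by have := Q0r m%:P r%:P; rewrite -polyCM !hornerC.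
have [[_ Qar] _] := lqi _ (horner_maximal Lmax (Lright a)).
rewrite -opprB; apply: LN.
have := Qar ('X - a%:P) b%:P; rewrite mulrBl -polyCM -(commr_polyX b%:P).
by rewrite !hornerD !hornerN hornerMX !hornerC hornerX subrr; apply.
Qed.

End QuasiInvariantPolynomials.

Section LeftJacobson.
Variable R : nzRingType.
Implicit Types (I L : R -> Prop) (c : R).

Lemma chain_union_left_ideal (F : (R -> Prop) -> Prop) :
  classical_sets.total_on F classical_sets.subset ->
  (forall X a, F X -> X a -> left_ideal X) -> (exists X a, F X /\ X a) ->
  left_ideal (fun a => exists2 X, F X & X a).
Proof.
move=> Ftot Fl [X0 [a0 [FX0 X0a0]]]; split; first split.
- by exists X0 => //; case: (Fl _ _ FX0 X0a0) => [[]].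
- move=> a b [X FX Xa] [Y FY Yb].
  have [[[_ XD _] _] [[_ YD _] _]] := (Fl _ _ FX Xa, Fl _ _ FY Yb).
  have [XY|YX] := Ftot X Y FX FY.
  + by exists Y => //; apply: YD => //; apply: XY.
  + by exists X => //; apply: XD => //; apply: YX.
- by move=> a [X FX Xa]; case: (Fl _ _ FX Xa) => [[_ _ XN] _]; exists X => //; apply: XN.
- by move=> a r [X FX Xa]; case: (Fl _ _ FX Xa) => [_ XM]; exists X => //; apply: XM.
Qed.

Lemma maximal_left_ideal_above I : left_ideal I -> ~ I 1 ->
  exists L, maximal_left_ideal L /\ forall z, I z -> L z.
Proof.
move=> Il I1.
pose good J := [/\ left_ideal J, ~ J 1 & forall z, I z -> J z].
have [|L [[L_empty|[Ll L1 IL]] Lmax]] :=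
  @classical_sets.Zorn_bigcup R (fun J => (forall z, ~ J z) \/ good J).
- move=> F Fgood Ftot.
  have goodF Y w : F Y -> Y w -> good Y.
    by move=> FY Yw; case: (Fgood Y FY) => // /(_ w).
  have [[X0 [z0 [FX0 X0z0]]]|Fempty] := classic (exists X z, F X /\ X z); last first.
    by left=> z [X FX Xz]; apply: Fempty; exists X, z.
  right; split.
  + apply: chain_union_left_ideal => //; last by exists X0, z0.
    by move=> X a FX Xa; case: (goodF _ _ FX Xa).
  + by move=> [X FX X1]; case: (goodF _ _ FX X1).
  + by move=> z Iz; exists X0 => //; case: (goodF _ _ FX0 X0z0) => _ _; apply.
- exfalso; apply: (Lmax I); last by right.
  split; first by move=> z /L_empty.
  by move=> IL; apply: (L_empty 0); apply: IL; case: Il => [[]].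
- exists L; split=> //; split=> //; first by exists 1.
  move=> N Nl [w Nw] LN a Na; apply: NNPP => La.
  apply: (Lmax N); first by split=> // NL; apply: La; apply: NL.
  right; split=> //; last by move=> z /IL /LN.
  by move=> N1; apply: Nw; rewrite -(mulr1 w); case: Nl => _; apply.
Qed.

Lemma left_invertible_one_sub c : (forall L, maximal_left_ideal L -> L c) ->
  forall r, exists u, u * (1 - r * c) = 1.
Proof.
move=> cJ r; apply: NNPP => noinv.
pose I z := exists y, z = y * (1 - r * c).
have Il : left_ideal I.
  split; first split.
  - by exists 0; rewrite mul0r.
  - by move=> _ _ [y ->] [y' ->]; exists (y + y'); rewrite mulrDl.
  - by move=> _ [y ->]; exists (- y); rewrite mulNr.
  - by move=> _ s [y ->]; exists (s * y); rewrite mulrA.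
have [|L [Lmax IL]] := maximal_left_ideal_above Il.
  by move=> [y e]; apply: noinv; exists y.
have [[[_ LD _] LM] _ _] := Lmax.
apply: (@left_ideal_not1 _ L); try by case: Lmax.
rewrite -[1](subrK (r * c)); apply: LD; first by apply: IL; exists 1; rewrite mul1r.
by apply: LM; apply: cJ.
Qed.

Lemma right_invertible_one_sub c : (forall r, exists u, u * (1 - r * c) = 1) ->
  forall v, exists w, (1 - c * v) * w = 1.
Proof.
move=> linv v; have [u hu] := linv v; have [w hw] := linv (- (u * v)).
have u_eq : 1 + u * v * c = u by rewrite -hu mulrBr mulr1 mulrA subrK.
rewrite mulNr opprK u_eq in hw.
have w_eq : w = 1 - v * c.
  by have := congr1 (fun x => w * x) hu; rewrite mulrA hw mul1r mulr1.
have vcu : v * c * u = u - 1.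
  by rewrite -[in RHS]hw w_eq mulrBl mul1r opprB addrC subrK.
have e : c * v * (c * u * v) = c * u * v - c * v.
  have -> : c * v * (c * u * v) = c * (v * c * u) * v by rewrite !mulrA.
  by rewrite vcu mulrBr mulr1 mulrBl.
exists (1 + c * u * v); rewrite mulrBl mul1r mulrDr mulr1 e.
by rewrite (addrC (c * v)) subrK addrK.
Qed.
(* the left Jacobson radical is contained in the (right) Jacobson radical:
   if c v + m = 1 with m in M, then m = 1 - c v is right invertible *)
Lemma left_jacobson_sub_jacobson c :
  (forall L, maximal_left_ideal L -> L c) -> jacobson c.
Proof.
move=> cJ M Mmax; apply: NNPP => Mc.
have [v [m [Mm e]]] := maximal_right_comax Mmax Mc.
have [w hw] := right_invertible_one_sub (left_invertible_one_sub cJ) v.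
have [Mr Mp _] := Mmax; apply: (right_ideal_not1 Mr Mp).
by rewrite -hw -e addrAC subrr add0r; case: Mr => _; apply.
Qed.

End LeftJacobson.

Lemma poly_right_qi_factor_commutative (A : nzRingType) :
  right_quasi_invariant {poly A} -> factor_by_jacobson_commutative A.
Proof. by move=> rqi a b M Mmax; apply: right_qi_poly_commutator. Qed.

Lemma poly_left_qi_factor_commutative (A : nzRingType) :
  left_quasi_invariant {poly A} -> factor_by_jacobson_commutative A.
Proof.
by move=> lqi a b; apply: left_jacobson_sub_jacobson => L Lmax; apply: left_qi_poly_commutator.
Qed.

Lemma central0 (R : nzRingType) : central (0 : R).
Proof. by move=> y; rewrite mul0r mulr0. Qed.

Lemma centralM (R : nzRingType) (x y : R) : central x -> central y -> central (x * y).
Proof. by move=> cx cy z; rewrite -mulrA cy mulrA cx mulrA. Qed.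

Section CentralPolynomials.
Variable A : nzRingType.
Implicit Types (f : {poly A}) (a c : A).

Lemma central_poly f : (forall i, central f`_i) -> central f.
Proof.
by move=> cf g; apply/polyP => i; rewrite coefM coefMr; apply: eq_bigr => j _; rewrite cf.
Qed.

Lemma central_polyC c : central c -> central c%:P.
Proof. by move=> cc; apply: central_poly => i; rewrite coefC; case: eqP => _ //; apply: central0. Qed.

Lemma commutative_poly : commutative_ring A -> commutative_ring {poly A}.
Proof. by move=> Acomm f; apply: central_poly => i; apply: Acomm. Qed.

Hypothesis ce : forall a, ~ central a ->
  exists x y, [/\ x <> 0, y <> 0, central x, central y & a * x = y].

(* descending induction on the coefficients: a nonzero polynomial whose
   coefficients of index >= n are central can be multiplied by a central
   constant into a nonzero polynomial with central coefficients *)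
Lemma poly_scale_central n f : f != 0 -> (forall i, (n <= i)%N -> central f`_i) ->
  exists c, [/\ central c, f * c%:P != 0 & forall i, central (f * c%:P)`_i].
Proof.
elim: n f => [|n IH] f f0 cf.
  exists 1; rewrite polyC1 mulr1; split=> // [y | i]; first by rewrite mul1r mulr1.
  exact: cf.
have [cn|] := classic (central f`_n).
  by apply: IH => // i; rewrite leq_eqVlt => /predU1P[<-|]; [|apply: cf].
move=> /ce[x [y [_ y0 cx cy fx]]].
have gn : (f * x%:P)`_n = y by rewrite coefMC.
have [||c [cc gc0 cg]] := IH (f * x%:P).
- by apply/eqP => g0; apply: y0; rewrite -gn g0 coef0.
- move=> i; rewrite leq_eqVlt => /predU1P[<-|ni]; first by rewrite gn.
  by rewrite coefMC; apply: centralM => //; apply: cf.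
by exists (x * c); rewrite polyCM mulrA; split=> //; apply: centralM.
Qed.

End CentralPolynomials.

Lemma centrally_essential_poly (A : nzRingType) :
  centrally_essential A -> centrally_essential {poly A}.
Proof.
case=> [Acomm|ce]; first by left; apply: commutative_poly.
right=> f fnc; have f0 : f != 0 by apply/eqP => f0; apply: fnc; rewrite f0; apply: central0.
have [|c [cc fc0 cfc]] := poly_scale_central ce (n := size f) f0.
  by move=> i /(nth_default 0) ->; apply: central0.
exists c%:P, (f * c%:P); split=> //; last exact: central_poly.
- by move=> c0; move: fc0; rewrite c0 mulr0 eqxx.
- exact/eqP.
- exact: central_polyC.
Qed.

Theorem lemma2p2 (A : nzRingType) :
  centrally_essential A ->
  ~ factor_by_jacobson_commutative A ->
  centrally_essential {poly A} /\
  ~ right_quasi_invariant {poly A} /\ ~ left_quasi_invariant {poly A}.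
Proof.
move=> ceA nJ; split; first exact: centrally_essential_poly.
split=> [/poly_right_qi_factor_commutative | /poly_left_qi_factor_commutative]; exact: nJ.
Qed.
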